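(* Let $\{x^k\}_k$, $\{z^k\}_k$ be generated by the normal map-based stochastic proximal gradient method described in the context. Then for all integers $0\le m<n$ and every sample $\omega$ with $L(\omega)<\infty$, writing $\tau=\tau_{m,n}$ and $e=e^{m,n}$, \begin{align*} \|F^\lambda_{\mathrm{nor}}(z^n)\|^2&\le\Big(1-\frac{\tau}{\lambda}\Big)^2\|F^\lambda_{\mathrm{nor}}(z^m)\|^2+\Big(L^2+\frac{2L}{\lambda}+\frac1{\lambda^2}\Big)\|x^n-x^m\|^2+\frac{1}{\lambda^2}\|e\|^2\\ &\quad+\frac2\lambda\Big(1-\frac\tau\lambda\Big)\big\langle F^\lambda_{\mathrm{nor}}(z^m),\lambda(\nabla f(x^n)-\nabla f(x^m))-(x^n-x^m)+e\big\rangle\\ &\quad+\frac2\lambda\langle\nabla f(x^n)-\nabla f(x^m),e\rangle-\frac{2}{\lambda^2}\langle e,x^n-x^m\rangle. \end{align*}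
   Context: Let $\varphi:\mathbb{R}^d\to(-\infty,\infty]$ be convex, lower semicontinuous and proper, let $f:\mathbb{R}^d\to\mathbb{R}$ be continuously differentiable on an open set containing $\mathrm{dom}\,\varphi$, and set $\psi=f+\varphi$. For $\lambda>0$ let $\mathrm{prox}_{\lambda\varphi}(x)=\operatorname{argmin}_y\{\varphi(y)+\frac{1}{2\lambda}\|x-y\|^2\}$, $\mathrm{env}_{\lambda\varphi}$ the Moreau envelope with $\nabla\mathrm{env}_{\lambda\varphi}(x)=(x-\mathrm{prox}_{\lambda\varphi}(x))/\lambda$, and $F^\lambda_{\mathrm{nor}}(z)=\nabla f(\mathrm{prox}_{\lambda\varphi}(z))+\frac1\lambda(z-\mathrm{prox}_{\lambda\varphi}(z))$. Method: on a filtered probability space $(\Omega,\mathcal F,\{\mathcal F_k\}_k,\mathbb P)$, with $\lambda>0$, step sizes $\alpha_k>0$, deterministic $z^0$, $x^0=\mathrm{prox}_{\lambda\varphi}(z^0)$, and $\mathcal F_{k+1}$-measurable random vectors $g^k$, set $z^{k+1}=z^k-\alpha_k(g^k+\nabla\mathrm{env}_{\lambda\varphi}(z^k))$, $x^{k+1}=\mathrm{prox}_{\lambda\varphi}(z^{k+1})$. Let $e^k=g^k-\nabla f(x^k)$. $L(\omega)=\sup_{\bar x\in\mathrm{cl}(\mathrm{conv}\{x^k(\omega)\}_k)}\mathrm{lip}\,\nabla f(\bar x)$ with $\mathrm{lip}\,\nabla f(\bar x)=\limsup_{x,x'\to\bar x,\,x\ne x'}\|\nabla f(x)-\nabla f(x')\|/\|x-x'\|$.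 $\tau_{m,n}=\sum_{i=m}^{n-1}\alpha_i$ and $e^{m,n}=-\sum_{i=m}^{n-1}\alpha_i[F^\lambda_{\mathrm{nor}}(z^i)-F^\lambda_{\mathrm{nor}}(z^m)]-\sum_{i=m}^{n-1}\alpha_ie^i$. *)

From HB Require Import structures.
From mathcomp Require Import all_boot all_order all_algebra.
From mathcomp Require Import all_classical all_reals all_analysis.
Set Implicit Arguments. Unset Strict Implicit. Unset Printing Implicit Defensive.
Import Order.TTheory GRing.Theory Num.Theory.
Local Open Scope classical_set_scope.
Local Open Scope ring_scope.

Section Defs.
Variables (R : realType) (d : nat).
Notation vec := 'rV[R]_d.

Definition dotv (u v : vec) : R := \sum_(i < d) u ord0 i * v ord0 i.
Definition enorm (u : vec) : R := Num.sqrt (dotv u u).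

Definition eopen (U : set vec) : Prop :=
  forall x, U x -> exists2 r : R, 0 < r & forall y, enorm (y - x) < r -> U y.
Definition eclosure (A : set vec) : set vec :=
  [set x | forall e : R, 0 < e -> exists y, A y /\ enorm (x - y) < e].
Definition conv_hull (S : set vec) : set vec :=
  [set y | exists n (w : 'I_n -> R) (p : 'I_n -> vec),
     [/\ (forall i, 0 <= w i), \sum_(i < n) w i = 1, (forall i, S (p i))
       & y = \sum_(i < n) w i *: p i]].

Definition C1_on (U : set vec) (f : vec -> R) (gradf : vec -> vec) : Prop :=
  (forall x, U x -> forall e : R, 0 < e -> exists2 r : R, 0 < r &
      forall y, enorm (y - x) < r ->
        `| f y - f x - dotv (gradf x) (y - x) | <= e * enorm (y - x)) /\
  (forall x, U x -> forall e : R, 0 < e -> exists2 r : R, 0 < r &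
      forall y, U y -> enorm (y - x) < r -> enorm (gradf y - gradf x) < e).

(* lip G xb = limsup_{x,x' -> xb, x <> x'} |G x - G x'| / |x - x'|, in \bar R
   (infimum over radii r > 0 of the supremum of the difference quotients
    over distinct x, x' in the open Euclidean ball of radius r around xb). *)
Definition lip (G : vec -> vec) (xb : vec) : \bar R :=
  ereal_inf [set s | exists2 r : R, 0 < r &
    s = ereal_sup [set q | exists x x' : vec,
          [/\ enorm (x - xb) < r, enorm (x' - xb) < r, x != x'
            & q = (enorm (G x - G x') / enorm (x - x'))%:E]]].

Definition dom (phi : vec -> \bar R) : set vec := [set x | (phi x < +oo)%E].
Definition proper_fun (phi : vec -> \bar R) : Prop :=
  (forall x, phi x != -oo%E) /\ (exists x, phi x != +oo%E).
Definition convex_fun (phi : vec -> \bar R) : Prop :=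
  forall (x y : vec) (t : R), 0 < t < 1 ->
    (phi (t *: x + (1 - t) *: y)%R <= t%:E * phi x + (1 - t)%:E * phi y)%E.
Definition lsc (phi : vec -> \bar R) : Prop :=
  forall (x : vec) (a : R), (a%:E < phi x)%E ->
    exists2 r : R, 0 < r & forall y, enorm (y - x) < r -> (a%:E < phi y)%E.

Definition is_prox (phi : vec -> \bar R) (lam : R) (p : vec -> vec) : Prop :=
  forall x y : vec,
    (phi (p x) + ((2 * lam)^-1 * enorm (x - p x) ^+ 2)%:E
       <= phi y + ((2 * lam)^-1 * enorm (x - y) ^+ 2)%:E)%E.

Definition grad_env (p : vec -> vec) (lam : R) (x : vec) : vec :=
  lam^-1 *: (x - p x).
Definition Fnor (gradf : vec -> vec) (p : vec -> vec) (lam : R) (z : vec) : vec :=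
  gradf (p z) + lam^-1 *: (z - p z).
End Defs.

Definition filtration d (Omega : measurableType d) (F : nat -> set (set Omega)) : Prop :=
  [/\ (forall k, sigma_algebra setT (F k)),
      (forall k, F k `<=` F k.+1) &
      (forall k, F k `<=` measurable)].

Definition vec_measurable_wrt d (Omega : measurableType d) (R : realType) (n : nat)
   (G : set (set Omega)) (X : Omega -> 'rV[R]_n) : Prop :=
  forall (i : 'I_n) (B : set R), measurable B -> G [set w | B (X w ord0 i)].

From HB Require Import structures.
From mathcomp Require Import all_boot all_order all_algebra.
From mathcomp Require Import all_classical all_reals all_analysis.
From mathcomp Require Import ring lra.
Set Implicit Arguments. Unset Strict Implicit. Unset Printing Implicit Defensive.
Import Order.TTheory GRing.Theory Num.Theory.
Local Open Scope classical_set_scope.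
Local Open Scope ring_scope.

(* Summing the recursion z^{i+1} = z^i - alpha_i (F(z^i) + e^i), with F the
   normal map, gives z^n - z^m = -tau F(z^m) + e^{m,n}.  Substituting this into
   F(z^n) = grad f(x^n) + (z^n - x^n)/lam writes F(z^n) as
   (1 - tau/lam) F(z^m) + lam^-1 (lam dg - dx + e^{m,n}) with dx = x^n - x^m and
   dg = grad f(x^n) - grad f(x^m).  Expanding the square, the only terms not
   already in the bound are |dg|^2 - (2/lam) <dg, dx>, which is at most
   (L^2 + 2L/lam) |dx|^2 as soon as |dg| <= L |dx|.  That Lipschitz estimate
   holds because the segment [x^m, x^n] lies in the convex hull of the iterates,
   where lip grad f <= L, and a local Lipschitz modulus below c at every point
   of a segment gives the global bound c along it (a supremum argument on
   [0, 1]).  No property of phi or of prox is used. *)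

Lemma telescope_increments (R : pzRingType) (V : lmodType R)
    (z F e : nat -> V) (alpha : nat -> R) (m n : nat) :
  (m <= n)%N -> (forall i, z i.+1 - z i = - (alpha i *: (F i + e i))) ->
  z n - z m = - ((\sum_(m <= i < n) alpha i) *: F m)
              + (- (\sum_(m <= i < n) alpha i *: (F i - F m))
                 - \sum_(m <= i < n) alpha i *: e i).
Proof.
move=> le_mn step; rewrite -telescope_sumr // (eq_bigr _ (fun i _ => step i)).
rewrite sumrN scaler_suml addrA -!opprD -!big_split /=.
by congr (- _); apply: eq_bigr => i _; rewrite -!scalerDr [F m + _]addrC subrK.
Qed.

Section Euclid.
Variables (R : realType) (d : nat).
Notation vec := 'rV[R]_d.
Implicit Types (u v w : vec) (a : R).

Lemma dotvC u v : dotv u v = dotv v u.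
Proof. by apply: eq_bigr => i _; rewrite mulrC. Qed.

Lemma dotvDl u v w : dotv (u + v) w = dotv u w + dotv v w.
Proof. by rewrite /dotv -big_split; apply: eq_bigr => i _; rewrite !mxE mulrDl. Qed.

Lemma dotvDr u v w : dotv w (u + v) = dotv w u + dotv w v.
Proof. by rewrite dotvC dotvDl !(dotvC w). Qed.

Lemma dotvZl a u v : dotv (a *: u) v = a * dotv u v.
Proof. by rewrite /dotv mulr_sumr; apply: eq_bigr => i _; rewrite !mxE mulrA. Qed.

Lemma dotvZr a u v : dotv v (a *: u) = a * dotv v u.
Proof. by rewrite dotvC dotvZl dotvC. Qed.

Lemma dotvNl u v : dotv (- u) v = - dotv u v.
Proof. by rewrite -scaleN1r dotvZl mulN1r. Qed.

Lemma dotvNr u v : dotv v (- u) = - dotv v u.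
Proof. by rewrite dotvC dotvNl dotvC. Qed.

Lemma dotvv_ge0 u : 0 <= dotv u u.
Proof. by apply: sumr_ge0 => i _; rewrite -expr2 sqr_ge0. Qed.

Lemma dotvv_eq0 u : (dotv u u == 0) = (u == 0).
Proof.
apply/eqP/eqP => [uu0|->]; last by apply: big1 => i _; rewrite mxE mulr0.
apply/matrixP => i j; rewrite mxE (ord1 i).
have sq_ge0 k : true -> 0 <= u ord0 k * u ord0 k by rewrite -expr2 sqr_ge0.
by have /eqP := (@psumr_eq0P _ _ _ _ sq_ge0 uu0 j isT); rewrite mulf_eq0 orbb => /eqP.
Qed.

Lemma enorm_ge0 u : 0 <= enorm u.
Proof. exact: sqrtr_ge0. Qed.

Lemma enorm_sqr u : enorm u ^+ 2 = dotv u u.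
Proof. by rewrite sqr_sqrtr // dotvv_ge0. Qed.

Lemma enorm_eq0 u : (enorm u == 0) = (u == 0).
Proof. by rewrite -dotvv_eq0 -enorm_sqr sqrf_eq0. Qed.

Lemma enorm0 : enorm (0 : vec) = 0.
Proof. by apply/eqP; rewrite enorm_eq0. Qed.

Lemma enorm_gt0 u : (0 < enorm u) = (u != 0).
Proof. by rewrite lt_def enorm_eq0 enorm_ge0 andbT. Qed.

Lemma enormZ a u : enorm (a *: u) = `|a| * enorm u.
Proof. by rewrite /enorm dotvZl dotvZr mulrA -expr2 sqrtrM ?sqr_ge0 // sqrtr_sqr. Qed.

Lemma normr_dotv_le u v : `|dotv u v| <= enorm u * enorm v.
Proof.
rewrite -ler_sqr ?nnegrE ?mulr_ge0 ?enorm_ge0 // exprMn !enorm_sqr real_normK ?num_real //.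
have [/eqP|uu_neq0] := eqVneq (dotv u u) 0.
  by rewrite dotvv_eq0 => /eqP->; rewrite -(scale0r 0) !dotvZl !mul0r expr0n.
have uu_gt0 : 0 < dotv u u by rewrite lt_def uu_neq0 dotvv_ge0.
have := dotvv_ge0 (dotv u u *: v - dotv u v *: u).
rewrite !(dotvDl, dotvDr, dotvNl, dotvNr, dotvZl, dotvZr) (dotvC v u) => h.
by rewrite -subr_ge0 -(pmulr_rge0 _ uu_gt0); nra.
Qed.

Lemma ler_enormD u v : enorm (u + v) <= enorm u + enorm v.
Proof.
rewrite -ler_sqr ?nnegrE ?addr_ge0 ?enorm_ge0 // sqrrD !enorm_sqr.
rewrite dotvDl !dotvDr (dotvC v u).
have := normr_dotv_le u v; have := ler_norm (dotv u v); lra.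
Qed.

End Euclid.

Section Lipschitz.
Variables (R : realType) (d : nat).
Notation vec := 'rV[R]_d.

Lemma locally_lipschitz_unit_interval (gam : R -> vec) (K : R) :
  (forall t, 0 <= t <= 1 -> exists2 del : R, 0 < del & forall s s',
     `|s - t| < del -> `|s' - t| < del -> enorm (gam s - gam s') <= K * `|s - s'|) ->
  enorm (gam 1 - gam 0) <= K.
Proof.
move=> loc.
pose A := [set t : R | 0 <= t <= 1 /\
  forall s, 0 <= s <= t -> enorm (gam s - gam 0) <= K * s].
have A0 : A 0.
  split=> [|s /andP[s_ge0 s_le0]]; first by rewrite lexx ler01.
  have -> : s = 0 by lra.
  by rewrite subrr enorm0 mulr0.
have hasA : has_sup A by split; [exists 0 | exists 1 => t [/andP[]]].
pose T := sup A.
have T_ge0 : 0 <= T := sup_upper_bound hasA A0.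
have T_le1 : T <= 1 by apply: ge_sup; [exists 0 | move=> t [/andP[]]].
have [del del_gt0 locT] := loc T (introT andP (conj T_ge0 T_le1)).
have [t0 At0 T_lt] := sup_adherent del_gt0 hasA.
rewrite -/T in T_lt.
have t0_le : t0 <= T := sup_upper_bound hasA At0.
case: At0 => [/andP[t0_ge0 _] At0].
(* The bound propagates from t0 across the del-neighbourhood of T, so A
   reaches beyond T unless it already contains 1. *)
have A_below s1 : 0 <= s1 <= 1 -> s1 <= T + del / 2 -> A s1.
  move=> s1_01 s1_le; split=> // s /andP[s_ge0 s_le].
  have [|t0_lt] := lerP s t0; first by move=> ?; apply: At0; apply/andP.
  have near_T : enorm (gam s - gam t0) <= K * (s - t0).
    rewrite -[s - t0]ger0_norm; last by rewrite subr_ge0 ltW.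
    by apply: locT; rewrite ltr_norml; apply/andP; split; lra.
  have := ler_enormD (gam s - gam t0) (gam t0 - gam 0); rewrite addrA subrK.
  have := At0 t0 (introT andP (conj t0_ge0 (lexx t0))); nra.
have [T_del|T_del] := lerP (T + del / 2) 1.
  have T_del_ge0 : 0 <= T + del / 2 by lra.
  have := sup_upper_bound hasA (A_below _ (introT andP (conj T_del_ge0 T_del)) (lexx _)).
  rewrite -/T; lra.
have one01 : 0 <= (1 : R) <= 1 by rewrite ler01 lexx.
have [_ A1] := A_below 1 one01 (ltW T_del).
by have := A1 1 one01; rewrite mulr1.
Qed.

Lemma locally_lipschitz_segment (G : vec -> vec) (a b : vec) (c : R) :
  (forall t, 0 <= t <= 1 -> exists2 r : R, 0 < r & forall y y',
     enorm (y - (a + t *: (b - a))) < r -> enorm (y' - (a + t *: (b - a))) < r ->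
     enorm (G y - G y') <= c * enorm (y - y')) ->
  enorm (G b - G a) <= c * enorm (b - a).
Proof.
move=> loc; pose N := enorm (b - a); pose h t := a + t *: (b - a).
have h_sub s t : h s - h t = (s - t) *: (b - a).
  by rewrite /h scalerBl opprD addrACA subrr add0r.
have := @locally_lipschitz_unit_interval (G \o h) (c * N).
have h1 : h 1 = b by rewrite /h scale1r addrC subrK.
have h0 : h 0 = a by rewrite /h scale0r addr0.
rewrite /= h1 h0; apply=> t /loc[r r_gt0 locG].
have N_ge0 : 0 <= N := enorm_ge0 _.
have N1_gt0 : 0 < N + 1 by lra.
exists (r / (N + 1)) => [|s s' ds ds']; first exact: divr_gt0.
rewrite ltr_pdivlMr // in ds; rewrite ltr_pdivlMr // in ds'.
have := locG (h s) (h s'); rewrite !h_sub !enormZ -/N mulrAC -mulrA; apply.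
- by have := normr_ge0 (s - t); nra.
- by have := normr_ge0 (s' - t); nra.
Qed.

Lemma lip_lt_locally_lipschitz (G : vec -> vec) (xb : vec) (c : R) :
  (lip G xb < c%:E)%E -> exists2 r : R, 0 < r & forall y y',
    enorm (y - xb) < r -> enorm (y' - xb) < r ->
    enorm (G y - G y') <= c * enorm (y - y').
Proof.
move=> /ereal_inf_lt[_ [r r_gt0 ->] sup_lt]; exists r => // y y' yr y'r.
have [->|y_neq] := eqVneq y y'; first by rewrite !subrr enorm0 mulr0.
have yy'_gt0 : 0 < enorm (y - y') by rewrite enorm_gt0 subr_eq0.
rewrite -ler_pdivrMr //; apply/ltW; rewrite -lte_fin.
by apply: le_lt_trans sup_lt; apply: ereal_sup_ubound; exists y, y'.
Qed.

Lemma lipschitz_segment_of_lip_le (G : vec -> vec) (a b : vec) (L : R) :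
  (forall t, 0 <= t <= 1 -> (lip G (a + t *: (b - a)) <= L%:E)%E) ->
  enorm (G b - G a) <= L * enorm (b - a).
Proof.
move=> lipL; set N := enorm (b - a).
have lip_lt c : L < c -> enorm (G b - G a) <= c * N.
  move=> Lc; apply: locally_lipschitz_segment => t /lipL lipt.
  by apply: lip_lt_locally_lipschitz; apply: le_lt_trans lipt _; rewrite lte_fin.
have N_ge0 : 0 <= N := enorm_ge0 _.
apply/ler_addgt0Pr => eps eps_gt0.
have q_gt0 : 0 < eps / (N + 1) by rewrite divr_gt0 //; lra.
have qN : eps / (N + 1) * N <= eps.
  by rewrite mulrAC ler_pdivrMr; [nra | lra].
have := lip_lt (L + eps / (N + 1)); rewrite mulrDl; lra.
Qed.

End Lipschitz.

Section ConvexHull.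
Variables (R : realType) (d : nat).
Notation vec := 'rV[R]_d.

Lemma sub_eclosure (A : set vec) : A `<=` eclosure A.
Proof. by move=> x Ax e e_gt0; exists x; rewrite subrr enorm0. Qed.

Lemma conv_hull_segment (S : set vec) (a b : vec) (t : R) :
  S a -> S b -> 0 <= t <= 1 -> conv_hull S (a + t *: (b - a)).
Proof.
move=> Sa Sb /andP[t_ge0 t_le1].
exists 2%N, (fun i : 'I_2 => if val i == 0%N then 1 - t else t),
  (fun i : 'I_2 => if val i == 0%N then a else b); split.
- by move=> i; case: ifP => _; lra.
- by rewrite big_ord_recl big_ord1 /= subrK.
- by move=> i; case: ifP.
- by rewrite big_ord_recl big_ord1 /=; apply/matrixP => i j; rewrite !mxE; ring.
Qed.

End ConvexHull.

Lemma Fnor_shift (R : realType) (d : nat) (gradf p : 'rV[R]_d -> 'rV[R]_d)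
    (lam tau : R) (z z' e : 'rV[R]_d) :
  lam != 0 -> z' - z = - (tau *: Fnor gradf p lam z) + e ->
  Fnor gradf p lam z' = (1 - tau / lam) *: Fnor gradf p lam z
    + lam^-1 *: (lam *: (gradf (p z') - gradf (p z)) - (p z' - p z) + e).
Proof.
move=> lam_neq0 dz.
have -> : z' = z - tau *: Fnor gradf p lam z + e by rewrite -addrA -dz addrC subrK.
by rewrite /Fnor; apply/matrixP => i j; rewrite !mxE; field.
Qed.

Lemma sqr_enorm_normal_map_le (R : realType) (d : nat) (lam L s : R)
    (a b c e : 'rV[R]_d) :
  0 < lam -> enorm b <= L * enorm c ->
  enorm (s *: a + lam^-1 *: (lam *: b - c + e)) ^+ 2 <=
      s ^+ 2 * enorm a ^+ 2
    + (L ^+ 2 + 2 * L / lam + 1 / lam ^+ 2) * enorm c ^+ 2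
    + 1 / lam ^+ 2 * enorm e ^+ 2
    + 2 / lam * s * dotv a (lam *: b - c + e)
    + 2 / lam * dotv b e
    - 2 / lam ^+ 2 * dotv e c.
Proof.
move=> lam_gt0 lip_bc.
have bb_le : dotv b b <= L ^+ 2 * dotv c c.
  by rewrite -!enorm_sqr -exprMn ler_sqr ?nnegrE ?enorm_ge0 // (le_trans _ lip_bc) ?enorm_ge0.
have bc_ge : - dotv b c <= L * dotv c c.
  rewrite -enorm_sqr; have := normr_dotv_le b c; have := ler_norm (- dotv b c).
  rewrite normrN; have := enorm_ge0 c; nra.
rewrite !enorm_sqr !(dotvDl, dotvDr, dotvNl, dotvNr, dotvZl, dotvZr).
rewrite (dotvC b a) (dotvC c a) (dotvC e a) (dotvC c b) (dotvC e b) (dotvC c e).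
rewrite -subr_ge0.
set rhs := (X in 0 <= X).
have -> : rhs = (L ^+ 2 * dotv c c - dotv b b) + 2 / lam * (L * dotv c c + dotv b c).
  by rewrite /rhs; field; rewrite gt_eqF.
apply: addr_ge0; first by rewrite subr_ge0.
by apply: mulr_ge0; [rewrite divr_ge0 ?ltW | lra].
Qed.

Theorem lemma2p9 (R : realType) (d : nat)
  (phi : 'rV[R]_d -> \bar R) (f : 'rV[R]_d -> R) (gradf : 'rV[R]_d -> 'rV[R]_d)
  (U : set 'rV[R]_d) (lam : R) (prox : 'rV[R]_d -> 'rV[R]_d)
  (md : measure_display) (Omega : measurableType md) (P : probability Omega R)
  (F : nat -> set (set Omega))
  (alpha : nat -> R) (z0 : 'rV[R]_d)
  (g z x : nat -> Omega -> 'rV[R]_d) :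
  convex_fun phi -> lsc phi -> proper_fun phi ->
  eopen U -> dom phi `<=` U -> C1_on U f gradf ->
  0 < lam -> is_prox phi lam prox ->
  filtration F ->
  (forall k, 0 < alpha k) ->
  (forall k, vec_measurable_wrt (F k.+1) (g k)) ->
  (forall w, z 0 w = z0) ->
  (forall k w, z k.+1 w = z k w - alpha k *: (g k w + grad_env prox lam (z k w))) ->
  (forall k w, x k w = prox (z k w)) ->
  let e k w := g k w - gradf (x k w) in
  let Lw w := ereal_sup [set lip gradf xb |
                 xb in eclosure (conv_hull (range (fun k => x k w)))] in
  let Fn := Fnor gradf prox lam in
  forall (m n : nat) (w : Omega), (m < n)%N -> (Lw w < +oo)%E ->
  let L := fine (Lw w) in
  let tau := \sum_(m <= i < n) alpha i in
  let emn := - (\sum_(m <= i < n) alpha i *: (Fn (z i w) - Fn (z m w)))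
             - \sum_(m <= i < n) alpha i *: e i w in
  let dx := x n w - x m w in
  let dg := gradf (x n w) - gradf (x m w) in
  enorm (Fn (z n w)) ^+ 2 <=
      (1 - tau / lam) ^+ 2 * enorm (Fn (z m w)) ^+ 2
    + (L ^+ 2 + 2 * L / lam + 1 / lam ^+ 2) * enorm dx ^+ 2
    + 1 / lam ^+ 2 * enorm emn ^+ 2
    + 2 / lam * (1 - tau / lam) * dotv (Fn (z m w)) (lam *: dg - dx + emn)
    + 2 / lam * dotv dg emn
    - 2 / lam ^+ 2 * dotv emn dx.
Proof.
move=> _ _ _ _ _ _ lam_gt0 _ _ _ _ _ zS xE e Lw Fn m n w lt_mn Lw_fin.
cbv zeta.
have step i : z i.+1 w - z i w = - (alpha i *: (Fn (z i w) + e i w)).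
  rewrite zS addrAC subrr add0r /Fn /Fnor /e xE.
  by rewrite [_ + (g i w - _)]addrC addrA subrK.
have dz := telescope_increments (ltnW lt_mn) step.
rewrite /Fn (Fnor_shift (lt0r_neq0 lam_gt0) dz) -!xE.
apply: sqr_enorm_normal_map_le => //.
apply: lipschitz_segment_of_lip_le => t t01.
have hull_t : eclosure (conv_hull (range (x^~ w))) (x m w + t *: (x n w - x m w)).
  by apply/sub_eclosure/conv_hull_segment; [exists m | exists n | ].
have lip_le_Lw : (lip gradf (x m w + t *: (x n w - x m w)) <= Lw w)%E.
  exact: ereal_sup_ubound (ex_intro2 _ _ _ hull_t erefl).
apply: le_trans lip_le_Lw _.
by case: (Lw w) Lw_fin => //= _; rewrite leNye.
Qed.
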